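(* Let $n\ge1$, $r>0$, let $\lambda_1<\lambda_2<\cdots$ be the positive roots of $J_{n/2}$, and define $u_{2j-1}=u_{2j}=-\left(\frac{\lambda_j}{\pi r}\right)^2$ for $j\ge1$. Then there is a constant $C$ (depending on $n$ and $r$ only) such that for all $1\le M\le\infty$, all integers $0\le k<M$, and all $z=x\pm ix$ with $x<0$, \[ \prod_{j=k+1}^M\frac{1}{|1-z/u_j|^2}\le C^{\sqrt{|x|}}. \]
   Context: $J_{n/2}$ is the Bessel function of the first kind of order $n/2$. For $M=\infty$ the product is the infinite product over $j\ge k+1$. *)

From Stdlib Require Import Reals Arith Factorial ClassicalEpsilon.
Open Scope R_scope.

(* gamma_half k = Gamma(k/2) for k >= 1, via Gamma(1/2)=sqrt pi, Gamma(1)=1,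
   Gamma(s+1) = s Gamma(s).  (gamma_half 0 is a junk value.) *)
Fixpoint gamma_half (k : nat) : R :=
  match k with
  | O => 0
  | S O => sqrt PI
  | S (S O) => 1
  | S (S k' as k1) => (INR k' / 2) * gamma_half k'
  end.

(* m-th term of the series of J_{n/2}(t) (t > 0):
   (-1)^m / (m! Gamma(m + n/2 + 1)) * (t/2)^(2m + n/2). *)
Definition bessel_term (n : nat) (t : R) (m : nat) : R :=
  (-1) ^ m / (INR (fact m) * gamma_half (2 * m + n + 2))
  * Rpower (t / 2) (INR (2 * m) + INR n / 2).

Definition bessel_J_half (n : nat) (t : R) : R :=
  epsilon (inhabits 0) (fun l => infinite_sum (bessel_term n t) l).

(* |1 - z/u|^2 for z = a + i b and u a nonzero real number. *)
Definition abs2_one_minus_div (a b u : R) : R :=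
  (1 - a / u) ^ 2 + (b / u) ^ 2.

(* prod_{j=k+1}^{M} f j  (empty product = 1 when M <= k). *)
Fixpoint prod_range (f : nat -> R) (k M : nat) : R :=
  match M with
  | O => 1
  | S M' => if Nat.leb (S M') k then 1 else prod_range f k M' * f (S M')
  end.

(* [J_{n/2}(t) = (t/2)^{n/2} Q(t^2/4)] with [Q] entire, and [R(t) = Q(t^2/4)] solves
   [t R'' + (n+1) R' + t R = 0].  A Sturm comparison with [sin (w (t - a))] shows that
   consecutive positive zeros of such a solution are at least [PI] apart, so
   [lam j >= c j] with [c = min (lam 1) PI].  For [z = x ± i x] and [a = x / u_m > 0] one has
   [|1 - z/u_m|^2 = (1 - a)^2 + a^2], so each factor is at most [2] and at most
   [exp (4 a) <= exp (B |x| / m^2)].  Bounding the first [N ~ sqrt |x|] factors by [2] and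
   the others by the exponential gives [2^N exp (2 B |x| / N) <= C^(sqrt |x|)]. *)

From Stdlib Require Import Reals Lra Lia Psatz ZArith Wf_nat ClassicalEpsilon Classical.
From Coquelicot Require Import Coquelicot.
Open Scope R_scope.

Lemma gamma_half_SS k : (1 <= k)%nat -> gamma_half (S (S k)) = INR k / 2 * gamma_half k.
Proof. intros H. destruct k as [|k]; [lia|]. reflexivity. Qed.

Lemma gamma_half_pos k : (1 <= k)%nat -> 0 < gamma_half k.
Proof.
  intros H. induction k as [k IH] using lt_wf_ind.
  destruct k as [|[|[|k]]]; try lia.
  - apply sqrt_lt_R0, PI_RGT_0.
  - simpl. lra.
  - rewrite gamma_half_SS by lia. apply Rmult_lt_0_compat.
    + apply Rmult_lt_0_compat; [apply lt_0_INR; lia | lra].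
    + apply IH; lia.
Qed.

(* [J_{n/2}(t) = (t/2)^{n/2} Q(t^2/4)] where [Q] has these coefficients. *)
Definition bessel_coef (n m : nat) : R :=
  (-1) ^ m / (INR (fact m) * gamma_half (2 * m + n + 2)).

Lemma bessel_coef_neq0 n m : bessel_coef n m <> 0.
Proof.
  unfold bessel_coef. apply Rmult_integral_contrapositive_currified.
  - apply pow_nonzero; lra.
  - apply Rinv_neq_0_compat, Rmult_integral_contrapositive_currified.
    + apply INR_fact_neq_0.
    + apply Rgt_not_eq, gamma_half_pos; lia.
Qed.

Lemma bessel_coef_rec n k :
  bessel_coef n (S k) * (INR (S k) * (INR (S k) + INR n / 2)) = - bessel_coef n k.
Proof.
  unfold bessel_coef.
  replace (2 * S k + n + 2)%nat with (S (S (2 * k + n + 2))) by lia.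
  rewrite gamma_half_SS, fact_simpl, mult_INR by lia.
  replace (INR (2 * k + n + 2)) with (2 * (INR (S k) + INR n / 2))
    by (rewrite !plus_INR, mult_INR, S_INR; simpl; field).
  pose proof (gamma_half_pos (2 * k + n + 2) ltac:(lia)).
  pose proof (INR_fact_neq_0 k).
  assert (0 < INR (S k)) by (apply lt_0_INR; lia).
  pose proof (pos_INR n).
  simpl pow. field. repeat split; lra.
Qed.

Lemma CV_radius_bessel_coef n : CV_radius (bessel_coef n) = p_infty.
Proof.
  apply CV_radius_infinite_DAlembert; [apply bessel_coef_neq0|].
  apply is_lim_seq_le_le with (u := fun _ => 0) (w := fun m => / INR (S m)).
  - intros m.
    assert (HSm : 1 <= INR (S m)) by (apply (le_INR 1); lia).
    pose proof (pos_INR n).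
    assert (Hratio : bessel_coef n (S m) / bessel_coef n m
                     = - / (INR (S m) * (INR (S m) + INR n / 2))).
    { replace (bessel_coef n m)
        with (- (bessel_coef n (S m) * (INR (S m) * (INR (S m) + INR n / 2))))
        by (rewrite bessel_coef_rec; ring).
      pose proof (bessel_coef_neq0 n (S m)).
      field. split; [lra|]. split; [|lra]. nra. }
    rewrite Hratio, Rabs_Ropp, Rabs_pos_eq by (apply Rlt_le, Rinv_0_lt_compat; nra).
    split; [apply Rlt_le, Rinv_0_lt_compat; nra|].
    apply Rinv_le_contravar; nra.
  - apply is_lim_seq_const.
  - apply (is_lim_seq_incr_1 (fun m => / INR m)).
    replace (Finite 0) with (Rbar_inv p_infty) by reflexivity.
    apply is_lim_seq_inv; [apply is_lim_seq_INR | discriminate].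
Qed.

Lemma Rabs_lt_infinite_CV_radius (a : nat -> R) x :
  CV_radius a = p_infty -> Rbar_lt (Rabs x) (CV_radius a).
Proof. intros H; rewrite H; exact I. Qed.

Lemma bessel_series_ode n s :
  s * PSeries (PS_derive (PS_derive (bessel_coef n))) s
  + (INR n / 2 + 1) * PSeries (PS_derive (bessel_coef n)) s
  + PSeries (bessel_coef n) s = 0.
Proof.
  assert (Hrad : forall a, CV_radius a = p_infty -> ex_pseries a s)
    by (intros a Ha; apply CV_radius_inside, Rabs_lt_infinite_CV_radius, Ha).
  assert (E0 := Hrad _ (CV_radius_bessel_coef n)).
  assert (E1 := Hrad (PS_derive (bessel_coef n))
                  ltac:(rewrite CV_radius_derive; apply CV_radius_bessel_coef)).
  assert (E2 := Hrad (PS_derive (PS_derive (bessel_coef n)))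
                  ltac:(rewrite !CV_radius_derive; apply CV_radius_bessel_coef)).
  rewrite <- PSeries_incr_1, <- PSeries_scal.
  rewrite <- PSeries_plus.
  2: apply ex_pseries_incr_1, E2.
  2: apply ex_pseries_scal; [apply Rmult_comm | exact E1].
  rewrite <- PSeries_plus.
  2: { apply ex_pseries_plus; [apply ex_pseries_incr_1, E2|].
       apply ex_pseries_scal; [apply Rmult_comm | exact E1]. }
  2: exact E0.
  rewrite <- (PSeries_const_0 s). apply PSeries_ext. intros k.
  unfold PS_plus, PS_scal, PS_incr_1, PS_derive.
  destruct k as [|k].
  - pose proof (bessel_coef_rec n 0).
    change (0 + (INR n / 2 + 1) * (INR 1 * bessel_coef n 1) + bessel_coef n 0 = 0).
    rewrite S_INR in *. simpl INR in *. lra.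
  - pose proof (bessel_coef_rec n (S k)).
    change (INR (S k) * (INR (S (S k)) * bessel_coef n (S (S k)))
            + (INR n / 2 + 1) * (INR (S (S k)) * bessel_coef n (S (S k)))
            + bessel_coef n (S k) = 0).
    rewrite !S_INR in *. nra.
Qed.

Lemma bessel_J_half_factor n t : 0 < t ->
  bessel_J_half n t = Rpower (t / 2) (INR n / 2) * PSeries (bessel_coef n) (t * t / 4).
Proof.
  intros Ht.
  assert (HS : infinite_sum (bessel_term n t)
                 (Rpower (t / 2) (INR n / 2) * PSeries (bessel_coef n) (t * t / 4))).
  { apply is_series_Reals.
    assert (E := PSeries_correct _ _ (CV_radius_inside _ (t * t / 4)
                   (Rabs_lt_infinite_CV_radius _ _ (CV_radius_bessel_coef n)))).
    apply is_series_ext with (a := fun k => scal (Rpower (t / 2) (INR n / 2))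
                                              (scal (pow_n (t * t / 4) k) (bessel_coef n k))).
    2: exact (is_series_scal _ _ _ E).
    intros k. unfold bessel_term, bessel_coef.
    rewrite Rpower_plus, Rpower_pow, pow_mult by lra.
    replace ((t / 2) ^ 2) with (t * t / 4) by field.
    unfold scal; simpl. unfold mult; simpl. rewrite pow_n_pow. ring. }
  unfold bessel_J_half.
  exact (uniqueness_sum _ _ _
           (epsilon_spec (inhabits 0) _ (ex_intro _ _ HS)) HS).
Qed.

Definition bessel_red (n : nat) (t : R) : R := PSeries (bessel_coef n) (t * t / 4).
Definition bessel_red' (n : nat) (t : R) : R :=
  t / 2 * PSeries (PS_derive (bessel_coef n)) (t * t / 4).
Definition bessel_red'' (n : nat) (t : R) : R :=
  PSeries (PS_derive (bessel_coef n)) (t * t / 4) / 2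
  + t * t / 4 * PSeries (PS_derive (PS_derive (bessel_coef n))) (t * t / 4).

Lemma is_derive_quarter_square t : is_derive (fun t => t * t / 4) t (t / 2).
Proof. auto_derive; [exact I | field]. Qed.

Lemma is_derive_bessel_red n t : is_derive (bessel_red n) t (bessel_red' n t).
Proof.
  unfold bessel_red, bessel_red'.
  apply (is_derive_comp (PSeries (bessel_coef n)) (fun t => t * t / 4)).
  - apply is_derive_PSeries, Rabs_lt_infinite_CV_radius, CV_radius_bessel_coef.
  - apply is_derive_quarter_square.
Qed.

Lemma is_derive_bessel_red' n t : is_derive (bessel_red' n) t (bessel_red'' n t).
Proof.
  unfold bessel_red', bessel_red''.
  evar (d : R). replace (_ + _) with d; unfold d.
  - apply (is_derive_mult (fun t => t / 2) (fun t => PSeries (PS_derive (bessel_coef n)) (t * t / 4))).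
    + auto_derive; [exact I | reflexivity].
    + apply (is_derive_comp (PSeries (PS_derive (bessel_coef n))) (fun t => t * t / 4)).
      * apply is_derive_PSeries, Rabs_lt_infinite_CV_radius.
        rewrite CV_radius_derive; apply CV_radius_bessel_coef.
      * apply is_derive_quarter_square.
    + intros; apply Rmult_comm.
  - simpl. unfold plus, mult, scal; simpl. unfold mult; simpl. field.
Qed.

Lemma bessel_red_ode n t :
  t * bessel_red'' n t + 2 * (INR n / 2 + 1 / 2) * bessel_red' n t + t * bessel_red n t = 0.
Proof.
  unfold bessel_red, bessel_red', bessel_red''.
  pose proof (bessel_series_ode n (t * t / 4)) as H.
  transitivity (t * 0); [|ring]. rewrite <- H. field.
Qed.

Lemma bessel_J_half_eq0 n t : 0 < t -> (bessel_J_half n t = 0 <-> bessel_red n t = 0).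
Proof.
  intros Ht. rewrite bessel_J_half_factor by exact Ht. unfold bessel_red.
  assert (0 < Rpower (t / 2) (INR n / 2)) by apply exp_pos.
  split; intros Hz.
  - destruct (Rmult_integral _ _ Hz); lra.
  - rewrite Hz; ring.
Qed.

Section SturmComparison.

Variables (F F' F'' : R -> R) (p : R).
Hypothesis p_ge1 : 1 <= p.
Hypothesis F_derive : forall t, is_derive F t (F' t).
Hypothesis F'_derive : forall t, is_derive F' t (F'' t).
Hypothesis F_ode : forall t, 0 < t -> t * F'' t + 2 * p * F' t + t * F t = 0.

(* The Wronskian [y' s - y s'] of [y = t^p F] and [s = sin (w (t - a))].  Since
   [y'' + (1 - p(p-1)/t^2) y = 0] and [s'' + w^2 s = 0], its derivative is
   [(w^2 - 1 + p(p-1)/t^2) y s], positive where [F > 0] and [s > 0] once [w > 1]. *)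
Definition sturm_wronskian (w a t : R) : R :=
  Rpower t (p - 1) * ((p * F t + t * F' t) * sin (w * (t - a))
                      - t * F t * (w * cos (w * (t - a)))).

Lemma is_derive_sturm_wronskian w a t : 0 < t ->
  derivable_pt_lim (sturm_wronskian w a) t
    (Rpower t (p - 1) * (F t * sin (w * (t - a)) * (t * (w * w - 1) + p * (p - 1) / t))).
Proof.
  intros Ht. apply is_derive_Reals. unfold sturm_wronskian.
  assert (Hpow : is_derive (fun x => Rpower x (p - 1)) t ((p - 1) * (Rpower t (p - 1) / t))).
  { apply is_derive_Reals.
    replace (Rpower t (p - 1) / t) with (Rpower t (p - 1 - 1)).
    - apply derivable_pt_lim_power, Ht.
    - replace (p - 1 - 1) with ((p - 1) + - (1)) by ring.
      rewrite Rpower_plus, Rpower_Ropp, Rpower_1 by exact Ht. reflexivity. }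
  auto_derive.
  - repeat split; eexists; eauto.
  - replace (Derive (fun x => F x) t) with (F' t)
      by (symmetry; apply is_derive_unique, F_derive).
    replace (Derive (fun x => F' x) t) with (F'' t)
      by (symmetry; apply is_derive_unique, F'_derive).
    replace (Derive (fun x => Rpower x (p - 1)) t) with ((p - 1) * (Rpower t (p - 1) / t))
      by (symmetry; apply is_derive_unique, Hpow).
    replace (F'' t) with (/ t * (t * F'' t)) by (field; lra).
    replace (t * F'' t) with (- (2 * p * F' t + t * F t)) by (pose proof (F_ode t Ht); lra).
    replace (t + - a) with (t - a) by ring.
    field. lra.
Qed.

Lemma positive_zero_gap a b : 0 < a -> a < b -> F a = 0 -> F b = 0 ->
  (forall t, a < t < b -> 0 < F t) -> PI <= b - a.
Proof.
  intros Ha Hab Fa Fb Fpos.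
  destruct (Rle_lt_dec PI (b - a)) as [|Hlt]; [assumption | exfalso].
  set (w := PI / (b - a)).
  assert (Hw : 1 < w).
  { unfold w. apply (Rmult_lt_reg_r (b - a)); [lra|]. field_simplify; lra. }
  assert (Hwb : w * (b - a) = PI) by (unfold w; field; lra).
  destruct (MVT_cor2 (sturm_wronskian w a)
     (fun t => Rpower t (p - 1) * (F t * sin (w * (t - a)) * (t * (w * w - 1) + p * (p - 1) / t)))
     a b Hab) as [c [Hc Hcab]].
  { intros c Hc. apply is_derive_sturm_wronskian. lra. }
  assert (Wa : sturm_wronskian w a a = 0).
  { unfold sturm_wronskian. rewrite Rminus_diag, Fa, (Rmult_0_r w), sin_0. ring. }
  assert (Wb : sturm_wronskian w a b = 0).
  { unfold sturm_wronskian. rewrite Fb, Hwb, sin_PI. ring. }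
  rewrite Wa, Wb in Hc.
  assert (Hsin : 0 < sin (w * (c - a))).
  { apply sin_gt_0; [apply Rmult_lt_0_compat; lra|].
    rewrite <- Hwb. apply Rmult_lt_compat_l; lra. }
  assert (Hcoef : 0 < c * (w * w - 1) + p * (p - 1) / c).
  { assert (0 <= p * (p - 1) / c)
      by (apply Rmult_le_pos; [nra | apply Rlt_le, Rinv_0_lt_compat; lra]).
    assert (0 < c * (w * w - 1)) by (apply Rmult_lt_0_compat; nra). lra. }
  assert (0 < Rpower c (p - 1) * (F c * sin (w * (c - a))
                                   * (c * (w * w - 1) + p * (p - 1) / c))).
  { repeat apply Rmult_lt_0_compat; try assumption.
    - apply exp_pos.
    - apply Fpos; lra. }
  nra.
Qed.

End SturmComparison.

Lemma continuous_root_free_sign (F : R -> R) a b : continuity F ->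
  (forall t, a < t < b -> F t <> 0) ->
  (forall t, a < t < b -> 0 < F t) \/ (forall t, a < t < b -> F t < 0).
Proof.
  intros HF Hne.
  assert (Hivt : forall t t', a < t < b -> a < t' < b -> F t < 0 -> 0 < F t' -> False).
  { intros t t' Ht Ht' Hneg Hpos.
    destruct (IVT_gen F t t' 0 HF) as [x [Hx Fx]].
    - split; [apply Rle_trans with (F t) | apply Rle_trans with (F t')];
        [apply Rmin_l | lra | lra | apply Rmax_r].
    - apply (Hne x); [|exact Fx].
      unfold Rmin, Rmax in Hx; destruct (Rle_dec t t'); lra. }
  destruct (classic (exists t, a < t < b /\ F t < 0)) as [[t [Ht Hneg]] | Hnone].
  - right. intros t' Ht'. pose proof (Hne t' Ht').
    destruct (Rlt_dec (F t') 0); [assumption|].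
    exfalso. apply (Hivt t t'); [exact Ht | exact Ht' | exact Hneg | lra].
  - left. intros t Ht. pose proof (Hne t Ht).
    destruct (Rlt_dec 0 (F t)) as [|Hnpos]; [assumption|].
    exfalso. apply Hnone. exists t. split; [exact Ht | lra].
Qed.

Lemma ode_zero_gap (F F' F'' : R -> R) p a b : 1 <= p ->
  (forall t, is_derive F t (F' t)) -> (forall t, is_derive F' t (F'' t)) ->
  (forall t, 0 < t -> t * F'' t + 2 * p * F' t + t * F t = 0) ->
  0 < a -> a < b -> F a = 0 -> F b = 0 -> (forall t, a < t < b -> F t <> 0) ->
  PI <= b - a.
Proof.
  intros Hp HF HF' Hode Ha Hab Fa Fb Hne.
  assert (Hcont : continuity F).
  { intros x. apply (derivable_continuous_pt _ _
      (exist _ _ (proj1 (is_derive_Reals _ _ _) (HF x)))). }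
  destruct (continuous_root_free_sign F a b Hcont Hne) as [Hpos | Hneg].
  - exact (positive_zero_gap F F' F'' p Hp HF HF' Hode a b Ha Hab Fa Fb Hpos).
  - apply (positive_zero_gap (fun t => - F t) (fun t => - F' t) (fun t => - F'' t) p Hp);
      try assumption.
    + intros t. apply (is_derive_opp F), HF.
    + intros t. apply (is_derive_opp F'), HF'.
    + intros t Ht. pose proof (Hode t Ht). lra.
    + rewrite Fa; ring.
    + rewrite Fb; ring.
    + intros t Ht. pose proof (Hneg t Ht). lra.
Qed.

Lemma increasing_from1_lt (lam : nat -> R) i k :
  (forall j, (1 <= j)%nat -> lam j < lam (S j)) ->
  (1 <= i)%nat -> (i < k)%nat -> lam i < lam k.
Proof.
  intros Hincr Hi Hk. induction Hk as [|k Hk IH].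
  - apply Hincr, Hi.
  - pose proof (Hincr k ltac:(lia)). lra.
Qed.

Lemma bessel_root_gap (n : nat) (lam : nat -> R) (hn : (1 <= n)%nat)
  (hlam_pos : forall j, (1 <= j)%nat -> 0 < lam j)
  (hlam_incr : forall j, (1 <= j)%nat -> lam j < lam (S j))
  (hlam_roots : forall t, 0 < t ->
      (bessel_J_half n t = 0 <-> exists j, (1 <= j)%nat /\ lam j = t)) j :
  (1 <= j)%nat -> PI <= lam (S j) - lam j.
Proof.
  intros Hj.
  assert (Ha : 0 < lam j) by (apply hlam_pos, Hj).
  assert (Hab : lam j < lam (S j)) by (apply hlam_incr, Hj).
  assert (Hroot : forall i, (1 <= i)%nat -> bessel_red n (lam i) = 0).
  { intros i Hi. apply bessel_J_half_eq0; [apply hlam_pos, Hi|].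
    apply hlam_roots; [apply hlam_pos, Hi|]. exists i; split; [exact Hi | reflexivity]. }
  apply (ode_zero_gap (bessel_red n) (bessel_red' n) (bessel_red'' n) (INR n / 2 + 1 / 2)).
  - assert (1 <= INR n) by (apply (le_INR 1), hn). lra.
  - apply is_derive_bessel_red.
  - apply is_derive_bessel_red'.
  - intros t _. apply bessel_red_ode.
  - exact Ha.
  - exact Hab.
  - apply Hroot, Hj.
  - apply Hroot; lia.
  - intros t Ht Hz. apply bessel_J_half_eq0, hlam_roots in Hz; try lra.
    destruct Hz as [i [Hi Hit]]. subst t.
    destruct (lt_eq_lt_dec i j) as [[Hij | ->] | Hji]; [| lra |].
    + pose proof (increasing_from1_lt lam i j hlam_incr Hi Hij). lra.
    + destruct (Nat.eq_dec i (S j)) as [-> | Hne]; [lra|].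
      pose proof (increasing_from1_lt lam (S j) i hlam_incr ltac:(lia) ltac:(lia)). lra.
Qed.

Lemma gap_linear_lower_bound (lam : nat -> R) d :
  (forall j, (1 <= j)%nat -> d <= lam (S j) - lam j) ->
  forall j, (1 <= j)%nat -> Rmin (lam 1%nat) d * INR j <= lam j.
Proof.
  intros Hgap j Hj. induction Hj as [|j Hj IH].
  - rewrite Rmult_1_r. apply Rmin_l.
  - rewrite S_INR. pose proof (Hgap j Hj). pose proof (Rmin_r (lam 1%nat) d). lra.
Qed.

Lemma exp_le x y : x <= y -> exp x <= exp y.
Proof. intros [H | ->]; [left; apply exp_increasing, H | right; reflexivity]. Qed.

Lemma abs2_one_minus_div_diag x s u : u <> 0 -> s = 1 \/ s = -1 ->
  abs2_one_minus_div x (s * x) u = (1 - x / u) ^ 2 + (x / u) ^ 2.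
Proof. intros Hu [-> | ->]; unfold abs2_one_minus_div; field; exact Hu. Qed.

Lemma inv_one_minus_sq_plus_sq_le a : 0 <= a ->
  0 < / ((1 - a) ^ 2 + a ^ 2) <= 2 /\ / ((1 - a) ^ 2 + a ^ 2) <= exp (4 * a).
Proof.
  intros Ha.
  assert (Hq : 1 / 2 <= (1 - a) ^ 2 + a ^ 2) by (pose proof (pow2_ge_0 (a - 1 / 2)); nra).
  split; [split|].
  - apply Rinv_0_lt_compat. lra.
  - replace 2 with (/ (1 / 2)) by field. apply Rinv_le_contravar; lra.
  - apply Rle_trans with (1 + 4 * a); [|apply exp_ineq1_le].
    rewrite <- Rmult_1_l at 1. rewrite <- Rdiv_def.
    apply Rle_div_l; [lra|]. nra.
Qed.

Lemma neg_div_neg_sq_le x l q c (m : nat) : x < 0 -> 0 < q -> 0 < c -> (1 <= m)%nat ->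
  c * INR m <= 2 * l -> x / - (l / q) ^ 2 <= 4 * q ^ 2 / c ^ 2 * - x / INR m ^ 2.
Proof.
  intros Hx Hq Hc Hm Hl.
  assert (HmR : 1 <= INR m) by (apply (le_INR 1), Hm).
  assert (Hcm : 0 < c * INR m) by nra.
  replace (x / - (l / q) ^ 2) with (- x * q ^ 2 / l ^ 2) by (field; nra).
  replace (4 * q ^ 2 / c ^ 2 * - x / INR m ^ 2) with (- x * q ^ 2 / ((c * INR m) ^ 2 / 4))
    by (field; lra).
  apply Rmult_le_compat_l; [apply Rmult_le_pos; nra|].
  apply Rinv_le_contravar; nra.
Qed.

Lemma inv_abs2_factor_le x s l q c (m : nat) :
  x < 0 -> s = 1 \/ s = -1 -> 0 < q -> 0 < c -> (1 <= m)%nat -> c * INR m <= 2 * l ->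
  let f := / abs2_one_minus_div x (s * x) (- (l / q) ^ 2) in
  0 <= f <= 2 /\ f <= exp (16 * q ^ 2 / c ^ 2 * - x / INR m ^ 2).
Proof.
  intros Hx Hs Hq Hc Hm Hl f.
  assert (Hl0 : 0 < l) by (assert (1 <= INR m) by (apply (le_INR 1), Hm); nra).
  assert (Hu : - (l / q) ^ 2 < 0).
  { assert (0 < l / q) by (apply Rdiv_lt_0_compat; assumption). nra. }
  assert (Ha : 0 <= x / - (l / q) ^ 2).
  { pose proof (Rinv_lt_0_compat _ Hu). unfold Rdiv. nra. }
  pose proof (neg_div_neg_sq_le x l q c m Hx Hq Hc Hm Hl).
  unfold f. rewrite abs2_one_minus_div_diag by (lra || exact Hs).
  destruct (inv_one_minus_sq_plus_sq_le _ Ha) as [[Hpos H2] Hexp].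
  split; [lra|].
  eapply Rle_trans; [exact Hexp|]. apply exp_le. lra.
Qed.

Lemma prod_range_S f k M :
  prod_range f k (S M) = if Nat.leb (S M) k then 1 else prod_range f k M * f (S M).
Proof. reflexivity. Qed.

Lemma prod_range_ge1 (g : nat -> R) k M :
  (forall m, (1 <= m)%nat -> 1 <= g m) -> 1 <= prod_range g k M.
Proof.
  intros Hg. induction M as [|M IH]; [simpl; lra|]. rewrite prod_range_S.
  destruct (Nat.leb (S M) k); [lra|]. pose proof (Hg (S M) ltac:(lia)). nra.
Qed.

(* The lower index [k] can only drop factors, and the dropped factors of [g] are [>= 1]. *)
Lemma prod_range_le_dominated (f g : nat -> R) k M :
  (forall m, (1 <= m)%nat -> 0 <= f m <= g m) -> (forall m, (1 <= m)%nat -> 1 <= g m) ->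
  0 <= prod_range f k M <= prod_range g 0 M.
Proof.
  intros Hfg Hg. induction M as [|M IH]; [simpl; lra|]. rewrite !prod_range_S.
  change (Nat.leb (S M) 0) with false.
  pose proof (prod_range_ge1 g 0 M Hg). destruct (Hfg (S M) ltac:(lia)).
  pose proof (Hg (S M) ltac:(lia)).
  destruct (Nat.leb (S M) k); split; nra.
Qed.

Definition factor_majorant (N : nat) (K : R) (m : nat) : R :=
  if Nat.leb m N then 2 else exp (K / INR m ^ 2).

Lemma factor_majorant_ge1 N K m : 0 <= K -> (1 <= m)%nat -> 1 <= factor_majorant N K m.
Proof.
  intros HK Hm. unfold factor_majorant. destruct (Nat.leb m N); [lra|].
  rewrite <- exp_0. apply exp_le, Rdiv_le_0_compat; [exact HK|].
  apply pow_lt, lt_0_INR. lia.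
Qed.

Lemma inv_sq_le_telescope (m : nat) : (1 <= m)%nat ->
  / INR m ^ 2 <= 2 * (/ INR m - / INR (S m)).
Proof.
  intros Hm. assert (HmR : 1 <= INR m) by (apply (le_INR 1), Hm).
  rewrite S_INR.
  replace (2 * (/ INR m - / (INR m + 1))) with (/ (INR m * (INR m + 1) / 2)) by (field; lra).
  apply Rinv_le_contravar; nra.
Qed.

(* Factors up to [N] contribute [2^N]; the tail [exp (K / m^2)] telescopes. *)
Lemma prod_factor_majorant_le N K M : 0 <= K ->
  prod_range (factor_majorant N K) 0 M
  <= 2 ^ Nat.min M N * exp (2 * K * (/ (INR N + 1) - / (INR (Nat.max M N) + 1))).
Proof.
  intros HK. induction M as [|M IH].
  - simpl. rewrite Rminus_diag, Rmult_0_r, exp_0. lra.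
  - rewrite prod_range_S. change (Nat.leb (S M) 0) with false.
    unfold factor_majorant at 2. destruct (Nat.leb (S M) N) eqn:E.
    + apply Nat.leb_le in E.
      rewrite Nat.min_l, Nat.max_r in * by lia. simpl pow. nra.
    + apply Nat.leb_gt in E.
      rewrite Nat.min_r, Nat.max_l in * by lia.
      pose proof (inv_sq_le_telescope (S M) ltac:(lia)) as Htel.
      rewrite <- !S_INR.
      eapply Rle_trans; [apply Rmult_le_compat_r; [left; apply exp_pos | exact IH]|].
      rewrite Rmult_assoc, <- exp_plus. apply Rmult_le_compat_l; [apply pow_le; lra|].
      apply exp_le. rewrite !S_INR in *. unfold Rdiv. nra.
Qed.

Lemma exists_cutoff B A : 0 <= B -> 0 < A ->
  exists N : nat, 2 ^ N * exp (2 * B * A / (INR N + 1)) <= exp (sqrt A * (2 * ln 2 + 2 * B)).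
Proof.
  intros HB HA. set (s := sqrt A).
  assert (Hs : 0 < s) by (apply sqrt_lt_R0, HA).
  assert (Hss : s * s = A) by (apply sqrt_sqrt; lra).
  assert (Hln2 : 0 < ln 2) by (rewrite <- ln_1; apply ln_increasing; lra).
  destruct (Rle_dec A 1) as [HA1 | HA1].
  - exists 0%nat. simpl. rewrite Rmult_1_l.
    apply exp_le. assert (A <= s) by nra. nra.
  - (* [N = up s] satisfies [s < N <= 2 s]. *)
    destruct (archimed s) as [Hup1 Hup2].
    assert (Hz : (0 <= up s)%Z) by (apply le_IZR; simpl; lra).
    exists (Z.to_nat (up s)).
    assert (HN : INR (Z.to_nat (up s)) = IZR (up s)) by (rewrite INR_IZR_INZ, Z2Nat.id; auto).
    rewrite <- (Rpower_pow _ 2), HN by lra. unfold Rpower. rewrite <- exp_plus. apply exp_le.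
    assert (2 * B * A / (IZR (up s) + 1) <= 2 * B * s).
    { apply Rle_div_l; [lra|]. rewrite <- Hss. assert (0 <= 2 * B * s) by nra. nra. }
    assert (1 < s) by nra.
    assert (IZR (up s) * ln 2 <= 2 * s * ln 2) by (apply Rmult_le_compat_r; lra).
    nra.
Qed.

Lemma prod_range_le_exp_sqrt (f : nat -> R) A B : 0 < A -> 0 <= B ->
  (forall m, (1 <= m)%nat -> 0 <= f m <= 2 /\ f m <= exp (B * A / INR m ^ 2)) ->
  forall k M, prod_range f k M <= exp (sqrt A * (2 * ln 2 + 2 * B)).
Proof.
  intros HA HB Hf k M.
  destruct (exists_cutoff B A HB HA) as [N HN].
  assert (HK : 0 <= B * A) by nra.
  eapply Rle_trans; [apply (prod_range_le_dominated f (factor_majorant N (B * A)))|].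
  - intros m Hm. destruct (Hf m Hm) as [[Hf0 Hf2] Hfe].
    unfold factor_majorant. destruct (Nat.leb m N); lra.
  - intros m Hm. apply factor_majorant_ge1; assumption.
  - eapply Rle_trans; [apply prod_factor_majorant_le, HK|].
    eapply Rle_trans; [|exact HN].
    pose proof (pos_INR N). pose proof (pos_INR (Nat.max M N)).
    apply Rmult_le_compat; [apply pow_le; lra | left; apply exp_pos | |].
    + apply Rle_pow; [lra | lia].
    + apply exp_le.
      assert (0 < / (INR (Nat.max M N) + 1)) by (apply Rinv_0_lt_compat; lra).
      unfold Rdiv. nra.
Qed.

Lemma half_succ_bounds m : (1 <= m)%nat ->
  (1 <= Nat.div (S m) 2)%nat /\ (m <= 2 * Nat.div (S m) 2)%nat.
Proof.
  intros Hm. pose proof (Nat.div_mod (S m) 2 ltac:(lia)).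
  pose proof (Nat.mod_upper_bound (S m) 2 ltac:(lia)). lia.
Qed.

Theorem lemma6p1 (n : nat) (r : R) (lam : nat -> R)
  (hn : (1 <= n)%nat) (hr : 0 < r)
  (hlam_pos : forall j, (1 <= j)%nat -> 0 < lam j)
  (hlam_incr : forall j, (1 <= j)%nat -> lam j < lam (S j))
  (hlam_roots : forall t, 0 < t ->
      (bessel_J_half n t = 0 <-> exists j, (1 <= j)%nat /\ lam j = t)) :
  let u := fun m : nat => - (lam (Nat.div (S m) 2) / (PI * r)) ^ 2 in
  exists C : R, 0 < C /\
    forall (s x : R), (s = 1 \/ s = -1) -> x < 0 ->
      let f := fun j : nat => / abs2_one_minus_div x (s * x) (u j) in
      (forall k M : nat, (k < M)%nat ->
         prod_range f k M <= Rpower C (sqrt (Rabs x))) /\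
      (forall (k : nat) (L : R),
         Un_cv (fun M => prod_range f k M) L ->
         L <= Rpower C (sqrt (Rabs x))).
Proof.
  intros u.
  set (c := Rmin (lam 1%nat) PI).
  assert (Hc : 0 < c) by (apply Rmin_glb_lt; [apply hlam_pos; lia | apply PI_RGT_0]).
  assert (Hlin := gap_linear_lower_bound lam PI (bessel_root_gap n lam hn hlam_pos hlam_incr hlam_roots)).
  set (B := 16 * (PI * r) ^ 2 / c ^ 2).
  assert (HB : 0 <= B) by (apply Rdiv_le_0_compat; [nra | apply pow_lt, Hc]).
  exists (exp (2 * ln 2 + 2 * B)). split; [apply exp_pos|].
  intros s x Hs Hx f.
  assert (Hbound : forall k M, prod_range f k M <= exp (sqrt (- x) * (2 * ln 2 + 2 * B))).
  { apply prod_range_le_exp_sqrt; [lra | exact HB |].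
    intros m Hm. destruct (half_succ_bounds m Hm) as [Hj Hmj].
    apply (inv_abs2_factor_le x s _ (PI * r) c m Hx Hs);
      [apply Rmult_lt_0_compat; [apply PI_RGT_0 | exact hr] | exact Hc | exact Hm |].
    apply le_INR in Hmj. rewrite mult_INR in Hmj.
    pose proof (Hlin _ Hj) as Hlam. fold c in Hlam. change (INR 2) with 2 in Hmj. nra. }
  replace (Rpower (exp (2 * ln 2 + 2 * B)) (sqrt (Rabs x)))
    with (exp (sqrt (- x) * (2 * ln 2 + 2 * B)))
    by (unfold Rpower; rewrite ln_exp, Rabs_left by exact Hx; reflexivity).
  split.
  - intros k M _. apply Hbound.
  - intros k L HL. eapply Rle_cv_lim; [exact (Hbound k) | exact HL |].
    apply is_lim_seq_Reals, is_lim_seq_const.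
Qed.
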